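(* Fix $\beta\in(0,1]$, $\lambda>0$, $p\in(1/2,1)$, trip data $\underline{x}\le\overline{x}$, $b<0$, $u_0\in\mathbb{R}$, and tariff bounds $0<\underline{\gamma}<\overline{\gamma}$ such that $\underline{x}+b\gamma\le u_0\le \overline{x}+b\gamma$ for all $\gamma\in[\underline{\gamma},\overline{\gamma}]$. For $\alpha>0$ let $\Gamma^*(\alpha)=\arg\max_{\gamma\in[\underline{\gamma},\overline{\gamma}]} f(\gamma;\alpha)$, with $f$ the expected revenue defined in the context (all parameters other than $\alpha$ held fixed). Then for $0<\alpha_1<\alpha_2$ we have $\max\Gamma^*(\alpha_2)\le\max\Gamma^*(\alpha_1)$ and $\min\Gamma^*(\alpha_2)\le\min\Gamma^*(\alpha_1)$. In particular, whenever the optimal tariff $\gamma^*(\alpha)$ is unique, it is monotonically nonincreasing in $\alpha$.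
   Context: Setting: a passenger chooses between a shared mobility service (SMoDS) and a certain alternative with objective utility $u_0$. At tariff $\gamma$, the SMoDS has two possible objective utilities, the worst case $\underline{u}(\gamma)=\underline{x}+b\gamma$ occurring with probability $p$ and the best case $\overline{u}(\gamma)=\overline{x}+b\gamma$ occurring with probability $1-p$. Probability weighting function: $\pi(q)=e^{-(-\ln q)^{\alpha}}$ for $q\in(0,1]$, $\pi(0)=0$. The reference point is the best-case outcome, $R=\overline{u}(\gamma)$, and the value function is $V(u)=(u-R)^{\beta}$ if $u\ge R$ and $V(u)=-\lambda(R-u)^{\beta}$ if $u<R$. Subjective utilities: $A^s=V(u_0)=-\lambda(\overline{u}-u_0)^{\beta}$ for the alternative, and $U^s=\pi(p)V(\underline{u})+\pi(1-p)V(\overline{u})=-\lambda\,\pi(p)(\overline{u}-\underline{u})^{\beta}$ for the SMoDS. Acceptance probability $p_s(\gamma)=e^{U^s}/(e^{U^s}+e^{A^s})$, i.e. $p_s(\gamma)=\big(1+\exp\{\lambda(\pi(p)(\overline{x}-\underline{x})^{\beta}-(\overline{x}+b\gamma-u_0)^{\beta})\}\big)^{-1}$. Expected revenue $f(\gamma)=\gamma\,p_s(\gamma)$, maximized over $\gamma\in[\underline{\gamma},\overline{\gamma}]$. *)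

(* R : realType.  powR (a `^ x) satisfies 0 `^ x = 0 for x <> 0. *)
From HB Require Import structures.
From mathcomp Require Import all_boot all_order all_algebra.
From mathcomp Require Import all_classical all_reals all_analysis.
Set Implicit Arguments. Unset Strict Implicit. Unset Printing Implicit Defensive.
Import Order.TTheory GRing.Theory Num.Theory.
Local Open Scope ring_scope.

Section SMoDS.
Variable R : realType.

(* Prelec probability weighting: pi(q) = exp(-(-ln q)^alpha), pi(0) = 0. *)
Definition piw (alpha q : R) : R :=
  if q == 0 then 0 else expR (- powR (- ln q) alpha).

Definition Vf (beta lam Rf u : R) : R :=
  if Rf <= u then powR (u - Rf) beta else - lam * powR (Rf - u) beta.

Definition ulow (xlow b gamma : R) : R := xlow + b * gamma.
Definition ubar (xbar b gamma : R) : R := xbar + b * gamma.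

Definition As (beta lam xbar b u0 gamma : R) : R :=
  Vf beta lam (ubar xbar b gamma) u0.

Definition Us (alpha beta lam p xlow xbar b gamma : R) : R :=
  piw alpha p * Vf beta lam (ubar xbar b gamma) (ulow xlow b gamma)
  + piw alpha (1 - p) * Vf beta lam (ubar xbar b gamma) (ubar xbar b gamma).

Definition ps (alpha beta lam p xlow xbar b u0 gamma : R) : R :=
  expR (Us alpha beta lam p xlow xbar b gamma) /
  (expR (Us alpha beta lam p xlow xbar b gamma)
   + expR (As beta lam xbar b u0 gamma)).

Definition revenue (alpha beta lam p xlow xbar b u0 gamma : R) : R :=
  gamma * ps alpha beta lam p xlow xbar b u0 gamma.

Definition argmax_tariff (alpha beta lam p xlow xbar b u0 gl gu : R) : set R :=
  [set g | gl <= g <= gu /\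
     forall g', gl <= g' <= gu ->
       revenue alpha beta lam p xlow xbar b u0 g'
       <= revenue alpha beta lam p xlow xbar b u0 g].

End SMoDS.

From mathcomp Require Import all_boot all_order all_algebra.
From mathcomp Require Import all_classical all_reals all_analysis.
From mathcomp Require Import lra ring.
Import Order.TTheory GRing.Theory Num.Theory.
Import numFieldNormedType.Exports.
Set Implicit Arguments. Unset Strict Implicit. Unset Printing Implicit Defensive.
Local Open Scope ring_scope.
Local Open Scope classical_set_scope.

(* On admissible tariffs the revenue is g / (1 + A * exp (- lam * (xbar + b g - u0) ^ beta))
   with A = exp (lam * pi_alpha(p) * (xbar - xlow) ^ beta), so alpha enters only through A.
   Since -ln p lies in (0, 1) for p > 1/2, pi_alpha(p) and hence A grow with alpha.  As
   exp (- lam * (xbar + b g - u0) ^ beta) grows with g (b < 0), the ratio of the revenue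
   for alpha2 to the one for alpha1 is nonincreasing in g.  Such a ratio moves the set of
   maximizers down in the strong set order (a maximizer for alpha1 lying below one for
   alpha2 lets the two be exchanged), so its largest and smallest elements, which exist
   by continuity and compactness, both decrease. *)

Section ArgmaxOn.
Variable R : realType.
Implicit Types (f : R -> R) (a b : R).

Definition argmax_on f a b : set R :=
  [set g | a <= g <= b /\ forall g', a <= g' <= b -> f g' <= f g].

Lemma eq_argmax_on f1 f2 a b : (forall g, a <= g <= b -> f1 g = f2 g) ->
  argmax_on f1 a b = argmax_on f2 a b.
Proof.
move=> f12; apply/seteqP; split => g [gab gmax]; split => // g' g'ab.
  by rewrite -!f12 //; exact: gmax.
by rewrite !f12 //; exact: gmax.
Qed.

Lemma argmax_onE f a b : argmax_on f a b =
  `[a, b] `&` \bigcap_(g' in `[a, b]) f @^-1` `[f g', +oo[.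
Proof.
apply/seteqP; split => g /=.
  by move=> [gab fg]; split=> [|g' /= g'ab]; rewrite /= in_itv /= ?andbT ?gab ?fg.
rewrite in_itv /= => -[gab fg]; split => // g' g'ab.
by have := fg g'; rewrite /= !in_itv /= andbT; apply.
Qed.

Lemma closed_argmax_on f a b : continuous f -> closed (argmax_on f a b).
Proof.
move=> cf; rewrite argmax_onE; apply: closedI; first exact: itv_closed.
apply: closed_bigI => g' _; apply: preimage_closed; [exact: in1W | exact: rray_closed].
Qed.

Lemma argmax_on_neq0 f a b : a <= b -> continuous f -> argmax_on f a b !=set0.
Proof.
move=> ab cf; have [c] := EVT_max ab (continuous_subspaceT cf).
by rewrite in_itv /= => cab fc; exists c; split => // g' g'ab; apply: fc; rewrite in_itv.
Qed.

Lemma argmax_on_sup f a b : a <= b -> continuous f ->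
  argmax_on f a b (sup (argmax_on f a b)) /\
  ubound (argmax_on f a b) (sup (argmax_on f a b)).
Proof.
move=> ab cf; have S0 := argmax_on_neq0 ab cf.
have ub : ubound (argmax_on f a b) (sup (argmax_on f a b)).
  by apply: sup_upper_bound; split => //; exists b => g [/andP[]].
split => //; apply: (@itv_closed_supremums _ R _ S0 (closed_argmax_on cf)).
by split => // u; exact: ge_sup.
Qed.

Lemma argmax_on_inf f a b : a <= b -> continuous f ->
  argmax_on f a b (inf (argmax_on f a b)) /\
  lbound (argmax_on f a b) (inf (argmax_on f a b)).
Proof.
move=> ab cf; have S0 := argmax_on_neq0 ab cf.
have lb : lbound (argmax_on f a b) (inf (argmax_on f a b)).
  by apply: ge_inf; exists a => g [/andP[]].
split => //; apply: (@itv_closed_infimums _ R _ S0 (closed_argmax_on cf)).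
by split => // u; exact: lb_le_inf.
Qed.

End ArgmaxOn.

Section MonotoneComparativeStatics.
Variables (R : realType) (f1 f2 : R -> R) (a b : R).
Hypothesis f_gt0 : forall g, a <= g <= b -> 0 < f1 g /\ 0 < f2 g.
Hypothesis ratio_nonincr : forall g g', a <= g <= b -> a <= g' <= b -> g <= g' ->
  f2 g' * f1 g <= f1 g' * f2 g.

Lemma argmax_on_swap g1 g2 : argmax_on f1 a b g1 -> argmax_on f2 a b g2 ->
  g1 <= g2 -> argmax_on f1 a b g2 /\ argmax_on f2 a b g1.
Proof.
move=> [g1ab max1] [g2ab max2] g12.
have cross := ratio_nonincr g1ab g2ab g12.
have [f1g1 f2g1] := f_gt0 g1ab; have [f1g2 f2g2] := f_gt0 g2ab.
have le1 : f1 g1 <= f1 g2 by have := max2 _ g1ab; nra.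
have le2 : f2 g2 <= f2 g1 by have := max1 _ g2ab; nra.
split; split => // g' g'ab.
- exact: le_trans (max1 _ g'ab) le1.
- exact: le_trans (max2 _ g'ab) le2.
Qed.

Hypotheses (ab : a <= b) (cf1 : continuous f1) (cf2 : continuous f2).

Lemma sup_argmax_on_le : sup (argmax_on f2 a b) <= sup (argmax_on f1 a b).
Proof.
have [M1 ub1] := argmax_on_sup ab cf1; have [M2 _] := argmax_on_sup ab cf2.
rewrite leNgt; apply/negP => lt12.
have [/ub1 + _] := argmax_on_swap M1 M2 (ltW lt12).
by rewrite leNgt lt12.
Qed.

Lemma inf_argmax_on_le : inf (argmax_on f2 a b) <= inf (argmax_on f1 a b).
Proof.
have [m1 _] := argmax_on_inf ab cf1; have [m2 lb2] := argmax_on_inf ab cf2.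
rewrite leNgt; apply/negP => lt12.
have [_ /lb2] := argmax_on_swap m1 m2 (ltW lt12).
by rewrite leNgt lt12.
Qed.

End MonotoneComparativeStatics.

Section TariffRevenue.
Variable R : realType.

Lemma continuous_powR_norm (be : R) : 0 < be -> continuous (fun t : R => `|t| `^ be).
Proof.
move=> be0 t; have [->|t0] := eqVneq t 0; last first.
  have tpos : 0 < `|t| by rewrite normr_gt0.
  have cpow : {for `|t|, continuous (fun x : R => x `^ be)}.
    apply/differentiable_continuous/derivable1_diffP.
    by apply: derivable_powR; rewrite in_itv /= tpos.
  exact: continuous_comp (@norm_continuous _ _ t) cpow.
apply/cvgrPdist_lt => e e0; rewrite normr0 powR0 ?gt_eqF //.
have d0 : 0 < (e / 2) `^ be^-1 by apply: powR_gt0; rewrite divr_gt0.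
apply/nbhs_normP; exists ((e / 2) `^ be^-1) => //= s.
rewrite /ball_ /= !sub0r !normrN (ger0_norm (powR_ge0 _ _)) => hs.
have : `|s| `^ be <= ((e / 2) `^ be^-1) `^ be.
  by apply: ge0_ler_powR; rewrite ?nnegrE ?powR_ge0 // ltW.
rewrite -powRrM mulVf ?gt_eqF // powRr1 ?divr_ge0 ?(ltW e0) //.
by move/le_lt_trans; apply; rewrite ltr_pdivrMr // ltr_pMr // ltr1n.
Qed.

(* Only the case [0 <= c + b * g] matters; the norm makes the formula continuous
   on all of [R], as [x `^ be = 1] for [x < 0]. *)
Definition tariff_revenue (be lam A c b g : R) : R :=
  g / (1 + A * expR (- lam * `|c + b * g| `^ be)).

Lemma tariff_revenue_denom_gt0 (A y : R) : 0 <= A -> 0 < 1 + A * expR y.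
Proof. by move=> A0; rewrite ltr_wpDr ?mulr_ge0 ?expR_ge0. Qed.

Lemma continuous_tariff_revenue (be lam A c b : R) : 0 < be -> 0 <= A ->
  continuous (tariff_revenue be lam A c b).
Proof.
move=> be0 A0 g.
have cL : continuous (fun g : R => c + b * g).
  move=> x; apply: cvgD; first exact: cvg_cst.
  by apply: cvgM; [exact: cvg_cst | exact: cvg_id].
have cN : continuous (fun g : R => `|c + b * g| `^ be).
  by move=> x; exact: continuous_comp (cL x) (@continuous_powR_norm be be0 _).
have cP : continuous (fun g : R => - lam * `|c + b * g| `^ be).
  by move=> x; apply: cvgM; [exact: cvg_cst | exact: cN].
have cE : continuous (fun g : R => expR (- lam * `|c + b * g| `^ be)).
  by move=> x; exact: continuous_comp (cP x) (@continuous_expR R _).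
apply: cvgM; first exact: cvg_id.
apply: cvgV; last first.
  by apply: cvgD; [exact: cvg_cst | apply: cvgM; [exact: cvg_cst | exact: cE]].
by rewrite gt_eqF // tariff_revenue_denom_gt0.
Qed.

Lemma tariff_revenue_gt0 (be lam A c b g : R) : 0 <= A -> 0 < g ->
  0 < tariff_revenue be lam A c b g.
Proof. by move=> A0 g0; rewrite divr_gt0 // tariff_revenue_denom_gt0. Qed.

Lemma tariff_revenue_ratio (be lam A1 A2 c b g g' : R) :
  0 < be -> 0 <= lam -> 0 <= A1 -> A1 <= A2 -> 0 <= g -> g <= g' -> b <= 0 ->
  0 <= c + b * g' ->
  tariff_revenue be lam A2 c b g' * tariff_revenue be lam A1 c b g <=
  tariff_revenue be lam A1 c b g' * tariff_revenue be lam A2 c b g.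
Proof.
move=> be0 lam0 A10 A12 g0 gg' b0 cg'0.
have cgg' : c + b * g' <= c + b * g by rewrite lerD2l ler_wnM2l.
set E := expR (- lam * `|c + b * g| `^ be).
set E' := expR (- lam * `|c + b * g'| `^ be).
have EE' : E <= E'.
  rewrite ler_expR !mulNr lerN2 ler_wpM2l // !ger0_norm ?(le_trans cg'0) //.
  by apply: ge0_ler_powR => //; rewrite ?nnegrE ?(ltW be0) // (le_trans cg'0).
have E0 : 0 < E := expR_gt0 _.
rewrite /tariff_revenue -/E -/E' !mulf_div.
apply: ler_wpM2l; first by rewrite mulr_ge0 // (le_trans g0 gg').
have A1E0 : 0 <= A1 * E := mulr_ge0 A10 (ltW E0).
have A1E'0 : 0 <= A1 * E' := mulr_ge0 A10 (le_trans (ltW E0) EE').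
have cross : 0 <= (A2 - A1) * (E' - E) by rewrite mulr_ge0 // subr_ge0.
rewrite lef_pV2 ?posrE; first by nra.
- by apply: mulr_gt0; nra.
- by apply: mulr_gt0; nra.
Qed.

Lemma Vf_le_ref (be lam Rf u : R) : 0 < be -> u <= Rf ->
  Vf be lam Rf u = - lam * (Rf - u) `^ be.
Proof.
move=> be0 uR; rewrite /Vf; case: ifP => // Ru.
have -> : u = Rf by apply/eqP; rewrite eq_le uR Ru.
by rewrite subrr powR0 ?gt_eqF // mulr0.
Qed.

Lemma Vf_ref (be lam Rf : R) : 0 < be -> Vf be lam Rf Rf = 0.
Proof. by move=> be0; rewrite /Vf lexx subrr powR0 // gt_eqF. Qed.

Lemma expR_logit (u v : R) : expR u / (expR u + expR v) = (1 + expR (v - u))^-1.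
Proof.
have eu := expR_gt0 u; have ev := expR_gt0 v.
by rewrite expRB; field; rewrite !gt_eqF // addr_gt0.
Qed.

Definition loss_weight (alpha be lam p xlow xbar : R) : R :=
  expR (lam * piw alpha p * (xbar - xlow) `^ be).

Lemma revenueE (alpha be lam p xlow xbar b u0 g : R) :
  0 < be -> xlow + b * g <= u0 -> u0 <= xbar + b * g ->
  revenue alpha be lam p xlow xbar b u0 g =
  tariff_revenue be lam (loss_weight alpha be lam p xlow xbar) (xbar - u0) b g.
Proof.
move=> be0 low_u0 u0_bar; have low_bar : xlow + b * g <= xbar + b * g by lra.
rewrite /revenue /ps /tariff_revenue /loss_weight expR_logit -expRD.
have -> : `|xbar - u0 + b * g| = xbar + b * g - u0 by rewrite ger0_norm; lra.
congr (g / (1 + expR _)).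
rewrite /As /Us /ubar /ulow (Vf_le_ref _ be0 u0_bar) (Vf_le_ref _ be0 low_bar) Vf_ref //.
rewrite (_ : xbar + b * g - (xlow + b * g) = xbar - xlow); last by lra.
(* Left in place, the [powR] atoms make [lra] attempt to compute with them. *)
move: ((xbar - xlow) `^ be) ((xbar + b * g - u0) `^ be) (piw alpha p) => P Q w.
lra.
Qed.

Lemma argmax_tariffE (alpha be lam p xlow xbar b u0 gl gu : R) : 0 < be ->
  (forall g, gl <= g <= gu -> xlow + b * g <= u0 /\ u0 <= xbar + b * g) ->
  argmax_tariff alpha be lam p xlow xbar b u0 gl gu =
  argmax_on
    (tariff_revenue be lam (loss_weight alpha be lam p xlow xbar) (xbar - u0) b) gl gu.
Proof. by move=> be0 adm; apply: eq_argmax_on => g /adm[]; exact: revenueE. Qed.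

Lemma piw_homo (p : R) : expR (-1) <= p -> p < 1 ->
  {homo (fun alpha => piw alpha p) : a1 a2 / a1 <= a2}.
Proof.
move=> p_ge p_lt1 a1 a2 a12.
have p0 : 0 < p := lt_le_trans (expR_gt0 _) p_ge.
rewrite /piw (negbTE (lt0r_neq0 p0)) ler_expR lerN2.
apply: ger_powR => //; apply/andP; split; first by rewrite oppr_gt0 ln_lt0 // p0.
by rewrite lerNl -(expRK (-1)) ler_ln ?posrE ?expR_gt0.
Qed.

Lemma expRN1_le_inv2 : expR (-1) <= 2^-1 :> R.
Proof.
rewrite expRN lef_pV2 ?posrE ?expR_gt0 //.
by have := expR_ge1Dx (1 : R); rewrite (_ : 1 + 1 = 2 :> R) //; lra.
Qed.

Lemma loss_weight_homo (be lam p xlow xbar : R) : 0 <= lam -> 2^-1 < p -> p < 1 ->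
  {homo (fun alpha => loss_weight alpha be lam p xlow xbar) : a1 a2 / a1 <= a2}.
Proof.
move=> lam0 p_gt p_lt1 a1 a2 a12; rewrite ler_expR.
apply: ler_wpM2r; first exact: powR_ge0.
apply: ler_wpM2l => //; apply: piw_homo a12 => //.
exact: le_trans expRN1_le_inv2 (ltW p_gt).
Qed.

End TariffRevenue.

Theorem mainTheorem2 (R : realType)
  (beta lam p xlow xbar b u0 gl gu alpha1 alpha2 : R) :
  0 < beta -> beta <= 1 -> 0 < lam -> 2^-1 < p -> p < 1 ->
  xlow <= xbar -> b < 0 -> 0 < gl -> gl < gu ->
  (forall g, gl <= g <= gu -> xlow + b * g <= u0 /\ u0 <= xbar + b * g) ->
  0 < alpha1 -> alpha1 < alpha2 ->
  exists M1 M2 m1 m2 : R,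
    [/\ argmax_tariff alpha1 beta lam p xlow xbar b u0 gl gu M1 /\
        (forall g, argmax_tariff alpha1 beta lam p xlow xbar b u0 gl gu g -> g <= M1),
        argmax_tariff alpha2 beta lam p xlow xbar b u0 gl gu M2 /\
        (forall g, argmax_tariff alpha2 beta lam p xlow xbar b u0 gl gu g -> g <= M2),
        argmax_tariff alpha1 beta lam p xlow xbar b u0 gl gu m1 /\
        (forall g, argmax_tariff alpha1 beta lam p xlow xbar b u0 gl gu g -> m1 <= g),
        argmax_tariff alpha2 beta lam p xlow xbar b u0 gl gu m2 /\
        (forall g, argmax_tariff alpha2 beta lam p xlow xbar b u0 gl gu g -> m2 <= g)
      & M2 <= M1 /\ m2 <= m1].
Proof.
move=> be0 _ lam0 p_gt p_lt1 _ b0 gl0 /ltW glu adm _ /ltW a12.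
pose A alpha := loss_weight alpha beta lam p xlow xbar.
pose f alpha := tariff_revenue beta lam (A alpha) (xbar - u0) b.
have argmaxE alpha : argmax_tariff alpha beta lam p xlow xbar b u0 gl gu =
    argmax_on (f alpha) gl gu := argmax_tariffE alpha lam p be0 adm.
have A0 alpha : 0 <= A alpha := expR_ge0 _.
have cf alpha : continuous (f alpha).
  exact: @continuous_tariff_revenue R beta lam (A alpha) (xbar - u0) b be0 (A0 alpha).
have f_gt0 g : gl <= g <= gu -> 0 < f alpha1 g /\ 0 < f alpha2 g.
  case/andP => gl_g _; have g0 : 0 < g := lt_le_trans gl0 gl_g.
  by split; apply: (@tariff_revenue_gt0 R beta lam _ (xbar - u0) b g (A0 _) g0).
have ratio g g' : gl <= g <= gu -> gl <= g' <= gu -> g <= g' ->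
    f alpha2 g' * f alpha1 g <= f alpha1 g' * f alpha2 g.
  move=> /andP[/(lt_le_trans gl0)/ltW g0 _] /adm[_ u0g'] gg'.
  have A12 : A alpha1 <= A alpha2 by apply: loss_weight_homo; rewrite ?(ltW lam0).
  apply: (tariff_revenue_ratio be0 (ltW lam0) (A0 _) A12 g0 gg' (ltW b0)).
  by rewrite addrAC subr_ge0.
rewrite !argmaxE.
exists (sup (argmax_on (f alpha1) gl gu)), (sup (argmax_on (f alpha2) gl gu)),
  (inf (argmax_on (f alpha1) gl gu)), (inf (argmax_on (f alpha2) gl gu)).
split; [exact: argmax_on_sup glu (cf _) | exact: argmax_on_sup glu (cf _) |
        exact: argmax_on_inf glu (cf _) | exact: argmax_on_inf glu (cf _) | split].
- exact: sup_argmax_on_le f_gt0 ratio glu (cf _) (cf _).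
- exact: inf_argmax_on_le f_gt0 ratio glu (cf _) (cf _).
Qed.
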